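(* Suppose $P$ is a transition kernel on finite $\mathcal{S}$ with actions $\mathcal{A}$, $\mathcal{K}=\{(s_k,a_k)\}_{k=1}^K$, and coefficients $\lambda_k^{s,a}\ge0$ with $\sum_k\lambda_k^{s,a}=1$ satisfy $P(\cdot|s,a)=\sum_{k}\lambda_k^{s,a}P(\cdot|s_k,a_k)$ for all $(s,a)$. Then for every $V:\mathcal{S}\to\mathbb{R}$ and every $(s,a)$, $$\sum_{k=1}^K\lambda_k^{s,a}\sqrt{\mathrm{Var}_{s_k,a_k}(V)}\le\sqrt{\mathrm{Var}_{s,a}(V)}.$$
   Context: $\mathrm{Var}_{s,a}(V)=\sum_{s'}P(s'|s,a)V(s')^2-\big(\sum_{s'}P(s'|s,a)V(s')\big)^2$. (In the paper this arises from a linear transition model $P=\Phi\Psi$ with features satisfying the anchor-state assumption, in which case $P(\cdot|s,a)=\sum_k\lambda_k^{s,a}P(\cdot|s_k,a_k)$ with the convex anchor coefficients.) *)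

From mathcomp Require Import all_boot all_order all_algebra.
Set Implicit Arguments. Unset Strict Implicit. Unset Printing Implicit Defensive.
Import Order.TTheory GRing.Theory Num.Theory.
Local Open Scope ring_scope.

(* P s a s' = probability of moving to s' from state s under action a. *)
Definition is_transition_kernel (R : numDomainType) (S : finType) (A : Type)
  (P : S -> A -> S -> R) : Prop :=
  forall s a, (forall s', 0 <= P s a s') /\ \sum_(s' : S) P s a s' = 1.

Definition Var (R : numDomainType) (S : finType) (A : Type)
  (P : S -> A -> S -> R) (s : S) (a : A) (V : S -> R) : R :=
  \sum_(s' : S) P s a s' * V s' ^+ 2 - (\sum_(s' : S) P s a s' * V s') ^+ 2.

From mathcomp Require Import all_boot all_order all_algebra.
From mathcomp Require Import ring lra.
Set Implicit Arguments. Unset Strict Implicit. Unset Printing Implicit Defensive.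
Import Order.TTheory GRing.Theory Num.Theory.
Local Open Scope ring_scope.

(* Since P(.|s,a) is the lambda-mixture of the anchor kernels, the law of
   total variance splits Var_{s,a}(V) into the mean of the anchor variances
   plus the (nonnegative) variance of the anchor means; hence
   sum_k lambda_k Var_k <= Var_{s,a}.  Concavity of the square root
   (Jensen) then gives sum_k lambda_k sqrt(Var_k) <= sqrt(sum_k lambda_k Var_k). *)

Definition variance (R : pzRingType) (I : finType) (w x : I -> R) : R :=
  \sum_i w i * x i ^+ 2 - (\sum_i w i * x i) ^+ 2.

Section ConvexWeights.
Variables (R : realDomainType) (I : finType) (w : I -> R).
Hypotheses (w_ge0 : forall i, 0 <= w i) (w_sum1 : \sum_i w i = 1).

Lemma sqr_mean_le_mean_sqr (x : I -> R) :
  (\sum_i w i * x i) ^+ 2 <= \sum_i w i * x i ^+ 2.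
Proof.
set m := \sum_i w i * x i.
have spread_ge0 : 0 <= \sum_i w i * (x i - m) ^+ 2.
  by apply: sumr_ge0 => i _; rewrite mulr_ge0 ?sqr_ge0.
have spreadE : \sum_i w i * (x i - m) ^+ 2 =
    \sum_i w i * x i ^+ 2 - m *+ 2 * m + m ^+ 2 * \sum_i w i.
  transitivity (\sum_i (w i * x i ^+ 2 - m *+ 2 * (w i * x i) + m ^+ 2 * w i)).
    by apply: eq_bigr => i _; ring.
  by rewrite big_split sumrB /= -!mulr_sumr.
by move: spread_ge0; rewrite spreadE w_sum1; lra.
Qed.

Lemma variance_ge0 (x : I -> R) : 0 <= variance w x.
Proof. by rewrite subr_ge0 sqr_mean_le_mean_sqr. Qed.

End ConvexWeights.

Lemma mean_sqrt_le_sqrt_mean (R : rcfType) (I : finType) (w v : I -> R) :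
  (forall i, 0 <= w i) -> \sum_i w i = 1 -> (forall i, 0 <= v i) ->
  \sum_i w i * Num.sqrt (v i) <= Num.sqrt (\sum_i w i * v i).
Proof.
move=> w_ge0 w_sum1 v_ge0.
have mean_ge0 : 0 <= \sum_i w i * Num.sqrt (v i).
  by apply: sumr_ge0 => i _; rewrite mulr_ge0 ?sqrtr_ge0.
rewrite -[leLHS]ger0_norm // -sqrtr_sqr ler_sqrt; last first.
  by apply: sumr_ge0 => i _; rewrite mulr_ge0.
under [leRHS]eq_bigr => i _ do rewrite -(sqr_sqrtr (v_ge0 i)).
exact: sqr_mean_le_mean_sqr.
Qed.

Section Mixture.
Variables (R : realDomainType) (I J : finType).
Variables (l : J -> R) (q : J -> I -> R) (p : I -> R).
Hypothesis p_mixture : forall i, p i = \sum_j l j * q j i.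

Lemma mean_mixture (f : I -> R) :
  \sum_i p i * f i = \sum_j l j * \sum_i q j i * f i.
Proof.
under eq_bigr => i _ do rewrite p_mixture mulr_suml.
rewrite exchange_big; apply: eq_bigr => j _; rewrite mulr_sumr.
by apply: eq_bigr => i _; rewrite mulrA.
Qed.

Lemma mean_variance_le_variance_mixture (x : I -> R) :
  (forall j, 0 <= l j) -> \sum_j l j = 1 ->
  \sum_j l j * variance (q j) x <= variance p x.
Proof.
move=> l_ge0 l_sum1.
have totalE : variance p x = \sum_j l j * variance (q j) x
    + variance l (fun j => \sum_i q j i * x i).
  rewrite /variance !mean_mixture.
  under [in RHS]eq_bigr => j _ do rewrite mulrBr.
  by rewrite sumrB; ring.
by rewrite totalE lerDl variance_ge0.
Qed.

End Mixture.

Theorem lemma3 (R : rcfType) (S : finType) (A : Type) (K : nat)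
  (P : S -> A -> S -> R)
  (anchor_s : 'I_K -> S) (anchor_a : 'I_K -> A)
  (lambda : S -> A -> 'I_K -> R) :
  is_transition_kernel P ->
  (forall s a k, 0 <= lambda s a k) ->
  (forall s a, \sum_(k < K) lambda s a k = 1) ->
  (forall s a s', P s a s' = \sum_(k < K) lambda s a k * P (anchor_s k) (anchor_a k) s') ->
  forall (V : S -> R) (s : S) (a : A),
    \sum_(k < K) lambda s a k * Num.sqrt (Var P (anchor_s k) (anchor_a k) V)
      <= Num.sqrt (Var P s a V).
Proof.
move=> P_kernel lambda_ge0 lambda_sum1 P_mixture V s a.
have Var_ge0 s' a' : 0 <= Var P s' a' V.
  by have [P_ge0 P_sum1] := P_kernel s' a'; exact: variance_ge0.
apply: le_trans (mean_sqrt_le_sqrt_mean (lambda_ge0 s a) (lambda_sum1 s a)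
  (fun k => Var_ge0 (anchor_s k) (anchor_a k))) _.
rewrite ler_sqrt //.
exact: mean_variance_le_variance_mixture (P_mixture s a) V (lambda_ge0 s a) (lambda_sum1 s a).
Qed.
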